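(* Assume Dickson's conjecture. Then there exist infinitely many primes $q$ such that $2q+1$, $6q+1$ and $8q+1$ are all prime, while $iq+1$ is not prime for each $i\in\{10,12,14,16,18\}$.
   Context: Dickson's conjecture: Let $a_1,\dots,a_k$ be integers and $b_1,\dots,b_k$ positive integers. If there is no prime $q$ such that $q$ divides $\prod_{i=1}^k(a_i+b_in)$ for every $n\in\{0,1,\dots,q-1\}$, then there are infinitely many positive integers $n$ for which $a_1+b_1n,\dots,a_k+b_kn$ are all prime. *)

From mathcomp Require Import all_boot all_order all_algebra.
Set Implicit Arguments. Unset Strict Implicit. Unset Printing Implicit Defensive.
Import GRing.Theory Num.Theory.

Definition int_prime (z : int) : Prop := exists p : nat, prime p /\ z = Posz p.

Definition DicksonConjecture : Prop :=
  forall (k : nat) (a : 'I_k -> int) (b : 'I_k -> nat),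
    (forall i, 0 < b i)%N ->
    (~ exists q : nat, prime q /\
        forall n : nat, (n < q)%N ->
          ((Posz q) %| (\prod_(i < k) (a i + Posz (b i * n)%N))%R)%Z) ->
    forall N : nat, exists n : nat, (N < n)%N /\ (0 < n)%N /\
      forall i, int_prime (a i + Posz (b i * n)%N)%R.

From mathcomp Require Import all_boot all_order all_algebra.

Set Implicit Arguments.
Unset Strict Implicit.
Unset Printing Implicit Defensive.

(* Take q = 641 + 2310 n, where 2310 = 2 * 3 * 5 * 7 * 11.  Modulo 2310 this
   forces 3 | 10q+1, 7 | 12q+1, 5 | 14q+1, 3 | 16q+1 and 11 | 18q+1.  The four
   affine forms q, 2q+1, 6q+1, 8q+1 in n are admissible: a prime p <= 11 divides
   2310 but none of their values at n = 0, and for p > 11 each form has at most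
   one root modulo p, so four forms cannot cover all p residues.  Dickson's
   conjecture then yields infinitely many such n. *)

Lemma linear_root_uniq (p a b n m : nat) : prime p -> ~~ (p %| b) ->
  n <= m < p -> p %| a + b * n -> p %| a + b * m -> n = m.
Proof.
move=> pp pNb /andP[le_nm lt_mp] dvd_n dvd_m.
have : p %| b * (m - n) by rewrite mulnBr -(subnDl a) dvdn_sub.
rewrite Euclid_dvdM // (negbTE pNb) /= => dvd_mn.
apply/eqP; rewrite eqn_leq le_nm leqNgt -subn_gt0; apply: contraL dvd_mn => gt0_mn.
by rewrite gtnNdvd // (leq_ltn_trans (leq_subr n m)).
Qed.

Lemma card_linear_roots (p : nat) (s : seq (nat * nat)) :
  prime p -> all (fun f => ~~ (p %| f.2)) s ->
  #|[set n : 'I_p | p %| \prod_(f <- s) (f.1 + f.2 * n)]| <= size s.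
Proof.
move=> pp; elim: s => [|f s IHs] /=.
  by move=> _; rewrite leqn0 cards_eq0; apply/eqP/setP => n; rewrite !inE big_nil Euclid_dvd1.
move=> /andP[pNf {}/IHs le_s].
have -> : [set n : 'I_p | p %| \prod_(g <- f :: s) (g.1 + g.2 * n)] =
    [set n : 'I_p | p %| f.1 + f.2 * n] :|: [set n : 'I_p | p %| \prod_(g <- s) (g.1 + g.2 * n)].
  by apply/setP => n; rewrite !inE big_cons Euclid_dvdM.
apply: leq_trans (leq_card_setU _ _) _; rewrite -[(size s).+1]add1n leq_add //.
apply/card_le1_eqP => n m; rewrite !inE => dvd_n dvd_m; apply/val_inj.
have [le_nm|le_mn] := leqP n m.
  by symmetry; apply: (linear_root_uniq pp pNf _ dvd_n dvd_m); rewrite le_nm ltn_ord.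
by apply: (linear_root_uniq pp pNf _ dvd_m dvd_n); rewrite ltnW // ltn_ord.
Qed.

Lemma exists_linear_nonroot (p : nat) (s : seq (nat * nat)) :
  prime p -> all (fun f => ~~ (p %| f.2)) s -> size s < p ->
  exists2 n, n < p & ~~ (p %| \prod_(f <- s) (f.1 + f.2 * n)).
Proof.
move=> pp pNs lt_sp.
case: (pickP [pred n : 'I_p | ~~ (p %| \prod_(f <- s) (f.1 + f.2 * n))]) => [n ? | all_roots].
  by exists n.
have roots_full : [set n : 'I_p | p %| \prod_(f <- s) (f.1 + f.2 * n)] = setT.
  by apply/setP => n; rewrite !inE; apply/negbFE/all_roots.
by have := card_linear_roots pp pNs; rewrite roots_full cardsT card_ord leqNgt lt_sp.
Qed.

Lemma int_primeP (x : nat) : int_prime (Posz x) <-> prime x.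
Proof. by split=> [[p [pp [->]]] | px]; last by exists x. Qed.

Lemma Dickson_seq : DicksonConjecture ->
  forall s : seq (nat * nat), all (fun f => 0 < f.2) s ->
  (forall p, prime p -> exists2 n, n < p & ~~ (p %| \prod_(f <- s) (f.1 + f.2 * n))) ->
  forall N, exists2 n, N < n & all (fun f => prime (f.1 + f.2 * n)) s.
Proof.
move=> dickson s b_gt0 admissible N.
pose a (i : 'I_(size s)) := Posz (nth (0, 0) s i).1.
pose b (i : 'I_(size s)) := (nth (0, 0) s i).2.
have prodE n : (\prod_(i < size s) (a i + Posz (b i * n)))%R =
               Posz (\prod_(f <- s) (f.1 + f.2 * n)).
  rewrite (big_nth (0, 0)) big_mkord (big_morph Posz PoszM (erefl (1 : int))).
  by apply: eq_bigr => i _; rewrite PoszD.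
have [|[p [pp all_roots]]|n [lt_Nn [_ prime_n]]] := dickson _ a b _ _ N.
- by move=> i; apply: (allP b_gt0); rewrite mem_nth.
- have [n lt_np not_root] := admissible p pp.
  by have := all_roots n lt_np; rewrite prodE dvdzE /= (negbTE not_root).
exists n => //; apply/(all_nthP (0, 0)) => i lt_is.
by apply/int_primeP; rewrite PoszD; apply: (prime_n (Ordinal lt_is)).
Qed.

Lemma not_prime_dvd_add (d x m t : nat) :
  1 < d < x -> d %| x -> d %| m -> ~~ prime (x + m * t).
Proof.
move=> /andP[lt_1d lt_dx] dvd_dx dvd_dm; apply/negP => px.
have d_ne1 : d != 1 by rewrite gtn_eqF.
have /(prime_nt_dvdP px d_ne1) d_eq : d %| x + m * t by rewrite dvdn_add ?dvdn_mulr.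
by move: lt_dx; rewrite d_eq ltnNge leq_addr.
Qed.

Lemma mul_affine_add1 (c a b n : nat) : c * (a + b * n) + 1 = (c * a + 1) + (c * b) * n.
Proof. by rewrite mulnDr mulnA addnAC. Qed.

Definition affine_forms : seq (nat * nat) :=
  (641, 2310) :: [seq (c * 641 + 1, c * 2310) | c <- [:: 2; 6; 8]].

Lemma prime_le11_dvd_2310 (p : nat) : prime p -> p <= 11 -> p %| 2310.
Proof. by move: p; do 12! case=> //. Qed.

Lemma affine_forms_admissible (p : nat) : prime p ->
  exists2 n, n < p & ~~ (p %| \prod_(f <- affine_forms) (f.1 + f.2 * n)).
Proof.
move=> pp; have [le_p11|lt_11p] := leqP p 11.
  exists 0; first exact: prime_gt0.
  rewrite Euclid_dvd_prod // big_has; apply/hasPn => f f_in; rewrite muln0 addn0.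
  have coprime_f : coprime f.1 2310 by move: f f_in; apply/allP.
  apply: contraL (prime_le11_dvd_2310 pp le_p11) => dvd_pf.
  by rewrite -prime_coprime // (coprime_dvdl dvd_pf).
have ndvd_small x : 0 < x <= 11 -> ~~ (p %| x).
  by case/andP=> x_gt0 le_x11; rewrite gtnNdvd // (leq_ltn_trans le_x11).
have ndvd_2310 : ~~ (p %| 2310).
  by rewrite (_ : 2310 = 2 * 3 * 5 * 7 * 11) // !Euclid_dvdM // !negb_or !ndvd_small.
apply: exists_linear_nonroot; [done | apply/allP => f | exact: leq_trans lt_11p].
rewrite inE => /predU1P[-> //|/mapP[c c_in ->]] /=.
by rewrite Euclid_dvdM // negb_or ndvd_2310 ndvd_small //; move: c c_in; apply/allP.
Qed.

Theorem lemma6p1 :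
  DicksonConjecture ->
  forall N : nat, exists q : nat, (N < q)%N /\ prime q /\
    prime (2 * q + 1) /\ prime (6 * q + 1) /\ prime (8 * q + 1) /\
    (forall i : nat, i \in [:: 10; 12; 14; 16; 18]%N -> ~~ prime (i * q + 1)).
Proof.
move=> dickson N.
have [n lt_Nn /allP prime_forms] :=
  Dickson_seq dickson (isT : all (fun f => 0 < f.2) affine_forms) affine_forms_admissible N.
pose q := 641 + 2310 * n.
have prime_cq1 c : c \in [:: 2; 6; 8] -> prime (c * q + 1).
  by move=> c_in; rewrite mul_affine_add1 (prime_forms (_, _)) // inE map_f ?orbT.
have composite d i : 1 < d < i * 641 + 1 -> d %| i * 641 + 1 -> d %| 2310 ->
    ~~ prime (i * q + 1).
  by move=> *; rewrite mul_affine_add1 (@not_prime_dvd_add d) // dvdn_mull.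
exists q; split; first by rewrite ltn_addl // (leq_trans lt_Nn) // leq_pmull.
split; first by rewrite (prime_forms (_, _)) ?mem_head.
do 3 (split; first by rewrite prime_cq1).
by move=> i; rewrite !inE => /orP[|/orP[|/orP[|/orP[]]]] /eqP ->;
  [exact: (composite 3) | exact: (composite 7) | exact: (composite 5)
  | exact: (composite 3) | exact: (composite 11)].
Qed.
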